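(* Let $b_k>0$ for all $k\ge0$ and suppose that for some $m$, $$\frac{a_0}{b_0}\le\frac{a_1}{b_1}\le\dots\le\frac{a_m}{b_m},\qquad \frac{a_m}{b_m}\ge\frac{a_{m+1}}{b_{m+1}}\ge\frac{a_{m+2}}{b_{m+2}}\ge\cdots,$$ with at least one strict inequality in each chain. Let $$F(x)=\frac{A(x)}{B(x)}=\frac{\sum_{k=0}^\infty a_k(x)_k}{\sum_{k=0}^\infty b_k(x)_k},$$ and assume each series converges uniformly on all compact subsets of $\mathbb{R}$. Then $F(x+1)-F(x)<0$ for all sufficiently large $x$.
   Context: $(x)_k=x(x+1)\cdots(x+k-1)$ is the Pochhammer symbol, $(x)_0=1$. *)

From HB Require Import structures.
From mathcomp Require Import all_boot all_order all_algebra.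
From mathcomp Require Import all_classical all_reals all_analysis.
Set Implicit Arguments. Unset Strict Implicit. Unset Printing Implicit Defensive.
Import Order.TTheory GRing.Theory Num.Theory.
Local Open Scope ring_scope.

Definition pochhammer {R : numDomainType} (x : R) (k : nat) : R :=
  \prod_(i < k) (x + i%:R).

Definition poch_partial {R : numDomainType} (c : nat -> R) (n : nat) (x : R) : R :=
  \sum_(k < n) c k * pochhammer x k.

From HB Require Import structures.
From mathcomp Require Import all_boot all_order all_algebra.
From mathcomp Require Import all_classical all_reals all_analysis.
From mathcomp Require Import ring lra zify.
Set Implicit Arguments. Unset Strict Implicit. Unset Printing Implicit Defensive.
Import Order.TTheory GRing.Theory Num.Theory.
Import numFieldTopology.Exports numFieldNormedType.Exports.
Local Open Scope classical_set_scope.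
Local Open Scope ring_scope.

(* Write r_k = a_k / b_k and beta_k = b_k (x)_k.  Since x (x+1)_k = (x)_k (x + k),
     2 x (A_n(x+1) B_n(x) - A_n(x) B_n(x+1)) = sum_(k,j<n) (k - j) (r_k - r_j) beta_k beta_j.
   As r increases up to m and decreases afterwards, a pair (k, j) with an index below m
   contributes at most |k - j| (r_m - r_0) beta_k beta_j, the other pairs contribute
   nothing positive, and the pairs (N, j), j > N, where r_N > r_(N+1), contribute at most
   -(j - N) (r_N - r_(N+1)) beta_N beta_j.  For x >= 1 and k < N we have x (x)_k <= (x)_N,
   so for large x the negative terms dominate uniformly in n.  Letting n -> oo gives
   A(x+1) B(x) < A(x) B(x+1), and B > 0 on (0, +oo). *)

Lemma double_sum_sym (V : nmodType) n (f : 'I_n -> 'I_n -> V) :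
  \sum_(k < n) \sum_(j < n) (f k j + f j k) = (\sum_(k < n) \sum_(j < n) f k j) *+ 2.
Proof.
rewrite mulr2n [X in _ = _ + X]exchange_big -big_split /=.
by apply: eq_bigr => k _; rewrite -big_split.
Qed.

Section Pochhammer.
Variable R : numDomainType.
Implicit Types x : R.

Lemma pochhammerS x k : pochhammer x k.+1 = pochhammer x k * (x + k%:R).
Proof. by rewrite /pochhammer big_ord_recr. Qed.

Lemma pochhammer_gt0 x k : 0 < x -> 0 < pochhammer x k.
Proof. by move=> x_gt0; apply: prodr_gt0 => i _; rewrite ltr_wpDr. Qed.

Lemma mul_pochhammerD1 x k :
  x * pochhammer (x + 1) k = pochhammer x k * (x + k%:R).
Proof.
elim: k => [|k IHk]; first by rewrite /pochhammer !big_ord0 addr0 mul1r mulr1.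
by rewrite pochhammerS mulrA IHk pochhammerS -natr1; ring.
Qed.

Lemma pochhammer_nondecn x : 1 <= x -> {homo pochhammer x : j k / (j <= k)%N >-> j <= k}.
Proof.
move=> x_ge1; apply: Order.NatMonotonyTheory.nondecnP => k.
rewrite pochhammerS ler_peMr ?(le_trans x_ge1) ?lerDl //.
exact/ltW/pochhammer_gt0/(lt_le_trans ltr01).
Qed.

Lemma pochhammer_ltn x j k :
  1 <= x -> (j < k)%N -> x * pochhammer x j <= pochhammer x k.
Proof.
move=> x_ge1 jk; apply: le_trans (pochhammer_nondecn x_ge1 jk).
rewrite pochhammerS mulrC ler_wpM2l ?lerDl //.
exact/ltW/pochhammer_gt0/(lt_le_trans ltr01).
Qed.

End Pochhammer.

Section CrossDifference.
Variable R : numDomainType.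
Implicit Types (a b c : nat -> R) (x : R).

Lemma mul_poch_partialD1 c n x :
  x * poch_partial c n (x + 1) =
  x * poch_partial c n x + \sum_(k < n) k%:R * c k * pochhammer x k.
Proof.
rewrite /poch_partial !mulr_sumr -big_split; apply: eq_bigr => k _ /=.
by rewrite mulrCA mul_pochhammerD1; ring.
Qed.

Lemma cross_diff_double_sum a b n x :
  (x * (poch_partial a n (x + 1) * poch_partial b n x
        - poch_partial a n x * poch_partial b n (x + 1))) *+ 2 =
  \sum_(k < n) \sum_(j < n)
    (k%:R - j%:R) * (a k * b j - a j * b k) * (pochhammer x k * pochhammer x j).
Proof.
have -> : x * (poch_partial a n (x + 1) * poch_partial b n x
               - poch_partial a n x * poch_partial b n (x + 1)) =
  (x * poch_partial a n (x + 1)) * poch_partial b n x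
  - poch_partial a n x * (x * poch_partial b n (x + 1)) by ring.
rewrite !mul_poch_partialD1 [_ * _ - _](_ : _ =
  (\sum_(k < n) k%:R * a k * pochhammer x k) * poch_partial b n x
  - poch_partial a n x * \sum_(j < n) j%:R * b j * pochhammer x j); last by ring.
rewrite /poch_partial !mulr_suml -sumrB.
under eq_bigr => k _ do rewrite !mulr_sumr -sumrB.
rewrite -double_sum_sym; apply: eq_bigr => k _; apply: eq_bigr => j _ /=; ring.
Qed.

End CrossDifference.

Section Unimodal.
Variables (R : realDomainType) (r : nat -> R) (m : nat).
Hypothesis r_up : forall k, (k < m)%N -> r k <= r k.+1.
Hypothesis r_down : forall k, (m <= k)%N -> r k.+1 <= r k.

Lemma unimodal_nondecn j k : (k <= m)%N -> (j <= k)%N -> r j <= r k.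
Proof.
move=> km jk; apply: (Order.NatMonotonyTheory.nondecn_inP (D := [pred i | (i <= m)%N]));
  rewrite ?inE ?(leq_trans jk km) //.
- by move=> i l _ lm i' /andP[_ /ltnW i'l]; rewrite !inE in lm *; exact: leq_trans i'l lm.
- by move=> i _; exact: r_up.
Qed.

Lemma unimodal_nonincn j k : (m <= j)%N -> (j <= k)%N -> r k <= r j.
Proof.
move=> mj jk; apply: (Order.NatMonotonyTheory.nonincn_inP (D := [pred i | (m <= i)%N]));
  rewrite ?inE ?(leq_trans mj jk) //.
- by move=> i l mi _ i' /andP[/ltnW ii' _]; rewrite !inE in mi *; exact: leq_trans mi ii'.
- by move=> i mi _; exact: r_down.
Qed.

Lemma unimodal_le_peak k : r k <= r m.
Proof.
by case: (leqP k m) => [km|/ltnW mk]; [apply: unimodal_nondecn | apply: unimodal_nonincn].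
Qed.

Lemma unimodal_cross_le k j : (minn k j <= m)%N ->
  (k%:R - j%:R) * (r k - r j) <= `|k%:R - j%:R| * (r m - r 0).
Proof.
wlog kj : k j / (k <= j)%N => [hwlog|].
  case/orP: (leq_total k j) => [|jk]; first exact: hwlog.
  by rewrite minnC -mulrNN !opprB distrC; apply: hwlog.
rewrite (minn_idPl kj) => km.
rewrite -mulrNN !opprB distrC ger0_norm ?subr_ge0 ?ler_nat //.
by rewrite ler_wpM2l ?subr_ge0 ?ler_nat // lerB ?unimodal_le_peak ?unimodal_nondecn.
Qed.

Lemma unimodal_cross_le0 k j : (m <= k)%N -> (m <= j)%N ->
  (k%:R - j%:R) * (r k - r j) <= 0.
Proof.
wlog kj : k j / (k <= j)%N => [hwlog|mk mj].
  case/orP: (leq_total k j) => [|jk mk mj]; first exact: hwlog.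
  by rewrite -mulrNN !opprB; apply: hwlog.
by rewrite mulr_le0_ge0 ?subr_le0 ?ler_nat ?subr_ge0 ?unimodal_nonincn.
Qed.

End Unimodal.

Lemma normr_natB_le (R : realDomainType) k j c :
  (k <= c + j)%N -> (j <= c + k)%N -> `|k%:R - j%:R : R| <= c%:R.
Proof.
rewrite -!(ler_nat R) !natrD => kj jk.
by rewrite ler_norml; apply/andP; split; lra.
Qed.

Lemma dominated_bound_neg (R : realFieldType) (t q w e c u v : R) :
  0 <= w -> c <= w -> 0 <= e ->
  (t * v) *+ 2 <= e -> (t * u * q) *+ 4 <= e * c ->
  (t * (u * q + v * w) - e * w) *+ 2 <= - (e * c) / 2.
Proof.
move=> w_ge0 cw e_ge0 /(ler_wpM2r w_ge0) tail head.
have := ler_wpM2l e_ge0 cw; lra.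
Qed.

Section CrossSumEstimate.
Variables (R : realFieldType) (r beta : nat -> R) (m N n : nat).
Hypothesis r_up : forall k, (k < m)%N -> r k <= r k.+1.
Hypothesis r_down : forall k, (m <= k)%N -> r k.+1 <= r k.
Hypothesis mN : (m <= N)%N.
Hypothesis Nn : (N.+1 < n)%N.
Hypothesis beta_ge0 : forall k, 0 <= beta k.

Local Notation M := (r m - r 0).
Local Notation d := (r N - r N.+1).
Local Notation P := (\sum_(k < m) beta k).
Local Notation Q := (\sum_(j < N.+1) beta j).
Local Notation W := (\sum_(j < n | (N < j)%N) (j - N)%:R * beta j).

Let M_ge0 : 0 <= M.
Proof. by rewrite subr_ge0 unimodal_le_peak. Qed.

Let up k j := if (k < m)%N then `|k%:R - j%:R| * M else 0.
Let gap k j := if (k == N) && (N < j)%N then (j - N)%:R * d else 0.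

Let cross_le_weights k j :
  (k%:R - j%:R) * (r k - r j) <= up k j + up j k - gap k j - gap j k.
Proof.
wlog kj : k j / (k <= j)%N => [hwlog|].
  case/orP: (leq_total k j) => [|jk]; first exact: hwlog.
  by have := hwlog j k jk; rewrite -mulrNN !opprB; lra.
rewrite /up /gap; case: (ltnP k m) => [km|mk].
  have -> : (k == N) = false by apply/negbTE; lia.
  have -> : (N < k)%N = false by apply/negbTE; lia.
  rewrite andbF /= !subr0.
  apply: le_trans (unimodal_cross_le r_up r_down _) _.
    exact: leq_trans (geq_minl k j) (ltnW km).
  by rewrite lerDl; case: ifP => // _; exact: mulr_ge0.
have -> : (j == N) && (N < k)%N = false by apply/negbTE/andP => -[/eqP]; lia.
rewrite ltnNge (leq_trans mk kj) /= add0r subr0 sub0r.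
case: ifP => [/andP[/eqP kN Nj]|_].
  2: by rewrite oppr0 (unimodal_cross_le0 r_down mk (leq_trans mk kj)).
rewrite kN natrB ?(ltnW Nj) //.
have dj : d <= r N - r j by rewrite lerD2l lerN2 (unimodal_nonincn r_down) ?(leq_trans mN).
have jN : 0 <= j%:R - N%:R :> R by rewrite subr_ge0 ler_nat ltnW.
nra.
Qed.

Let dist_sum_le k : (k < m)%N ->
  \sum_(j < n) `|k%:R - j%:R| * beta j <= N%:R * Q + N.+1%:R * W.
Proof.
move=> km; rewrite (bigID (fun j : 'I_n => (N < j)%N)) /= addrC lerD //.
  rewrite (big_ord_widen n beta (ltnW Nn)) mulr_sumr.
  rewrite [X in _ <= X](eq_bigl (fun j : 'I_n => ~~ (N < j)%N)) => [|j]; last first.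
    by rewrite ltnS leqNgt.
  apply: ler_sum => j; rewrite -leqNgt => jN.
  by rewrite ler_wpM2r // normr_natB_le //; lia.
rewrite mulr_sumr; apply: ler_sum => j Nj.
by rewrite mulrA -natrM ler_wpM2r // normr_natB_le //; nia.
Qed.

Let up_sum_le :
  \sum_(k < n) \sum_(j < n) up k j * (beta k * beta j) <=
  M * P * (N%:R * Q + N.+1%:R * W).
Proof.
rewrite (big_ord_widen n beta (leq_trans mN (ltnW (ltnW Nn)))).
rewrite mulr_sumr mulr_suml [X in _ <= X]big_mkcond /=.
apply: ler_sum => k _; rewrite /up; case: ifP => km; last first.
  by rewrite big1 // => j _; rewrite mul0r.
have -> : \sum_(j < n) `|k%:R - j%:R| * M * (beta k * beta j) =
    M * beta k * \sum_(j < n) `|k%:R - j%:R| * beta j.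
  by rewrite mulr_sumr; apply: eq_bigr => j _; ring.
by rewrite ler_wpM2l ?mulr_ge0 ?dist_sum_le.
Qed.

Let gap_sum :
  \sum_(k < n) \sum_(j < n) gap k j * (beta k * beta j) = d * beta N * W.
Proof.
rewrite (bigD1 (Ordinal (ltnW Nn))) //= [X in _ + X]big1 ?addr0 => [|k kN]; last first.
  apply: big1 => j _; rewrite /gap; case: eqP => [kN'|_]; last by rewrite mul0r.
  by move: kN; rewrite -val_eqE /= kN' eqxx.
rewrite /gap eqxx mulr_sumr [RHS]big_mkcond; apply: eq_bigr => j _ /=.
by case: ifP => _; [ring | rewrite !mul0r].
Qed.

Let tail_ge : beta N.+1 <= W.
Proof.
rewrite (bigD1 (Ordinal Nn)) //= subSnn mul1r lerDl.
by apply: sumr_ge0 => j /andP[Nj _]; rewrite mulr_ge0.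
Qed.

Lemma cross_sum_le :
  \sum_(k < n) \sum_(j < n) (k%:R - j%:R) * (r k - r j) * (beta k * beta j) <=
  (M * P * (N%:R * Q + N.+1%:R * W) - d * beta N * W) *+ 2.
Proof.
apply: (@le_trans _ _ (\sum_(k < n) \sum_(j < n)
    (up k j + up j k - gap k j - gap j k) * (beta k * beta j))).
  by apply: ler_sum => k _; apply: ler_sum => j _; rewrite ler_wpM2r ?mulr_ge0.
rewrite -gap_sum (_ : \sum_k \sum_j _ = \sum_(k < n) \sum_(j < n)
  ((up k j - gap k j) * (beta k * beta j) + (up j k - gap j k) * (beta j * beta k))).
  rewrite double_sum_sym lerMn2r /=.
  under eq_bigr => k _ do rewrite (eq_bigr _ (fun j _ => mulrBl _ _ _)) sumrB.
  by rewrite sumrB lerB.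
by apply: eq_bigr => k _; apply: eq_bigr => j _; ring.
Qed.

Lemma cross_sum_le_neg :
  (M * P * N.+1%:R) *+ 2 <= d * beta N ->
  (M * P * N%:R * Q) *+ 4 <= d * beta N * beta N.+1 ->
  \sum_(k < n) \sum_(j < n) (k%:R - j%:R) * (r k - r j) * (beta k * beta j) <=
  - (d * beta N * beta N.+1) / 2.
Proof.
move=> large_tail large_head; apply: (le_trans cross_sum_le).
have W_ge0 : 0 <= W := le_trans (beta_ge0 _) tail_ge.
have P_ge0 : 0 <= P by rewrite sumr_ge0.
have dbeta_ge0 : 0 <= d * beta N.
  by apply: le_trans large_tail; rewrite mulrn_wge0 ?mulr_ge0.
exact: dominated_bound_neg.
Qed.

End CrossSumEstimate.

Section LargeArgument.
Variables (R : realFieldType) (a b : nat -> R) (m N : nat) (x : R).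
Hypothesis r_up : forall k, (k < m)%N -> a k / b k <= a k.+1 / b k.+1.
Hypothesis r_down : forall k, (m <= k)%N -> a k.+1 / b k.+1 <= a k / b k.
Hypothesis mN : (m <= N)%N.
Hypothesis b_gt0 : forall k, 0 < b k.
Hypothesis x_ge1 : 1 <= x.

Local Notation M := (a m / b m - a 0 / b 0).
Local Notation d := (a N / b N - a N.+1 / b N.+1).
Local Notation beta k := (b k * pochhammer x k).

Hypothesis large_tail :
  (M * (\sum_(k < m) b k) * N.+1%:R) *+ 2 <= d * b N * x.
Hypothesis large_head :
  (M * (\sum_(k < m) b k) * N%:R * \sum_(j < N.+1) b j) *+ 4 <= d * b N * b N.+1 * x.

Let x_gt0 : 0 < x := lt_le_trans ltr01 x_ge1.
Let poch_gt0 : 0 < pochhammer x N := pochhammer_gt0 N x_gt0.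
Let beta_ge0 k : 0 <= beta k := mulr_ge0 (ltW (b_gt0 k)) (ltW (pochhammer_gt0 k x_gt0)).
Let M_ge0 : 0 <= M.
Proof. by rewrite subr_ge0 (unimodal_le_peak r_up r_down). Qed.

Let head_sum_le : x * \sum_(k < m) beta k <= (\sum_(k < m) b k) * pochhammer x N.
Proof.
rewrite mulr_sumr mulr_suml; apply: ler_sum => k _.
by rewrite mulrCA ler_wpM2l ?(ltW (b_gt0 k)) ?pochhammer_ltn ?(leq_trans (ltn_ord k)).
Qed.

Let peak_sum_le : \sum_(j < N.+1) beta j <= (\sum_(j < N.+1) b j) * pochhammer x N.
Proof.
rewrite mulr_suml; apply: ler_sum => j _.
by rewrite ler_wpM2l ?(ltW (b_gt0 j)) // (pochhammer_nondecn x_ge1 (ltnSE (ltn_ord j))).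
Qed.

Let beta_succ_ge : b N.+1 * pochhammer x N <= beta N.+1.
Proof.
rewrite ler_wpM2l ?(ltW (b_gt0 _)) // (le_trans _ (pochhammer_ltn x_ge1 (ltnSn N))) //.
by rewrite ler_peMl ?(ltW poch_gt0).
Qed.

Let tail_dominated : (M * (\sum_(k < m) beta k) * N.+1%:R) *+ 2 <= d * beta N.
Proof.
rewrite -(ler_pM2l x_gt0).
have := ler_wpM2r (ltW poch_gt0) large_tail.
have := ler_wpM2l (mulrn_wge0 2 (mulr_ge0 M_ge0 (ler0n _ N.+1))) head_sum_le.
lra.
Qed.

Let head_dominated :
  (M * (\sum_(k < m) beta k) * N%:R * \sum_(j < N.+1) beta j) *+ 4 <=
  d * beta N * beta N.+1.
Proof.
have P_ge0 : 0 <= x * \sum_(k < m) beta k by rewrite mulr_ge0 ?sumr_ge0 // ltW.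
have Q_ge0 : 0 <= \sum_(j < N.+1) beta j by rewrite sumr_ge0.
have dbeta_ge0 : 0 <= x * d * beta N by rewrite !mulr_ge0 ?subr_ge0 ?r_down // ltW.
rewrite -(ler_pM2l x_gt0).
have := ler_wpM2l dbeta_ge0 beta_succ_ge.
have := ler_wpM2r (mulr_ge0 (ltW poch_gt0) (ltW poch_gt0)) large_head.
have := ler_wpM2l (mulrn_wge0 4 (mulr_ge0 M_ge0 (ler0n _ N)))
  (ler_pM P_ge0 Q_ge0 head_sum_le peak_sum_le).
lra.
Qed.

Lemma cross_diff_partial_le n : (N.+1 < n)%N ->
  (x * (poch_partial a n (x + 1) * poch_partial b n x
        - poch_partial a n x * poch_partial b n (x + 1))) *+ 2 <=
  - (d * beta N * beta N.+1) / 2.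
Proof.
move=> Nn; rewrite cross_diff_double_sum.
rewrite (eq_bigr (fun k : 'I_n => \sum_(j < n)
    (k%:R - j%:R) * (a k / b k - a j / b j) * (beta k * beta j))); last first.
  by move=> k _; apply: eq_bigr => j _; field; rewrite !lt0r_neq0.
exact: (cross_sum_le_neg r_up r_down mN Nn beta_ge0 tail_dominated head_dominated).
Qed.

Variables A B : R -> R.
Hypothesis gap_gt0 : a N.+1 / b N.+1 < a N / b N.
Hypothesis A_lim : forall y, poch_partial a ^~ y @ \oo --> A y.
Hypothesis B_lim : forall y, poch_partial b ^~ y @ \oo --> B y.

Lemma cross_diff_lt0 : A (x + 1) * B x - A x * B (x + 1) < 0.
Proof.
have lim : (fun n => (x * (poch_partial a n (x + 1) * poch_partial b n x
    - poch_partial a n x * poch_partial b n (x + 1))) *+ 2) @ \oo -->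
  (x * (A (x + 1) * B x - A x * B (x + 1))) *+ 2.
  apply: cvgMn; apply: cvgM; first exact: cvg_cst.
  by apply: cvgB; apply: cvgM.
have bound : (x * (A (x + 1) * B x - A x * B (x + 1))) *+ 2 <=
    - (d * beta N * beta N.+1) / 2.
  apply: (cvgr_to_le lim); near=> n; apply: cross_diff_partial_le.
  by near: n; exact: nbhs_infty_gt.
have neg : - (d * beta N * beta N.+1) / 2 < 0.
  by rewrite mulNr oppr_lt0 divr_gt0 // !mulr_gt0 ?pochhammer_gt0 // subr_gt0.
by move: (le_lt_trans bound neg); rewrite pmulrn_llt0 // pmulr_rlt0.
Unshelve. all: end_near.
Qed.

End LargeArgument.

Lemma uniform_compact_cvg_pointwise {U : topologicalType} {V : uniformType}
    (f : nat -> U -> V) (g : U -> V) :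
  (forall K : set U, compact K -> {uniform K, f @ \oo --> g}) ->
  forall x, f ^~ x @ \oo --> g x.
Proof. by move=> fg x; have := fg _ (compact_set1 (x := x)); rewrite uniform_set1. Qed.

Lemma poch_partial_lim_ge_head (R : realFieldType) (c : nat -> R) (C y : R) :
  (forall k, 0 <= c k) -> 0 < y -> poch_partial c ^~ y @ \oo --> C -> c 0%N <= C.
Proof.
move=> c_ge0 y_gt0 /cvgr_to_ge; apply; exists 1%N => // -[|n] // _.
rewrite /poch_partial big_ord_recl /= /pochhammer big_ord0 mulr1 lerDl.
by apply: sumr_ge0 => k _; rewrite mulr_ge0 // ltW // pochhammer_gt0.
Qed.

Lemma nbhs_pinfty_le_mul (R : realFieldType) (c C : R) :
  0 < c -> \forall x \near +oo, C <= c * x.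
Proof.
move=> c_gt0; near=> x; rewrite -(ler_pdivrMl _ _ c_gt0).
by near: x; apply: nbhs_pinfty_ge; exact: num_real.
Unshelve. all: end_near.
Qed.

Theorem lemma5 (R : realType) (a b : nat -> R) (A B : R -> R) (m : nat)
  (hb : forall k, 0 < b k)
  (hup : forall k, (k < m)%N -> a k / b k <= a k.+1 / b k.+1)
  (hup_strict : exists2 k, (k < m)%N & a k / b k < a k.+1 / b k.+1)
  (hdown : forall k, (m <= k)%N -> a k.+1 / b k.+1 <= a k / b k)
  (hdown_strict : exists2 k, (m <= k)%N & a k.+1 / b k.+1 < a k / b k)
  (hA : forall K : set R, compact K ->
          {uniform K, poch_partial a @ \oo --> A})
  (hB : forall K : set R, compact K ->
          {uniform K, poch_partial b @ \oo --> B}) :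
  \forall x \near +oo, A (x + 1) / B (x + 1) - A x / B x < 0.
Proof.
have [N mN gap] := hdown_strict.
have d_gt0 : 0 < a N / b N - a N.+1 / b N.+1 by rewrite subr_gt0.
have A_lim := uniform_compact_cvg_pointwise hA.
have B_lim := uniform_compact_cvg_pointwise hB.
have B_gt0 y : 0 < y -> 0 < B y.
  move=> y_gt0; apply: lt_le_trans (hb 0%N) _.
  by apply: poch_partial_lim_ge_head y_gt0 (B_lim y) => k; exact: ltW.
near=> x.
have x_ge1 : 1 <= x by near: x; apply: nbhs_pinfty_ge; exact: num_real.
have x_gt0 : 0 < x := lt_le_trans ltr01 x_ge1.
rewrite subr_lt0 ltr_pdivrMr ?B_gt0 ?addr_gt0 // mulrAC ltr_pdivlMr ?B_gt0 //.
rewrite -subr_lt0; apply: (cross_diff_lt0 hup hdown mN hb x_ge1 _ _ gap A_lim B_lim).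
  by near: x; apply: nbhs_pinfty_le_mul; rewrite !mulr_gt0.
by near: x; apply: nbhs_pinfty_le_mul; rewrite !mulr_gt0.
Unshelve. all: end_near.
Qed.
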